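(* If $R$ is a 2-primal ring, then $\beta(R)=\mathcal N(R)=E_R(0)=\beta_{co}(R)$.
   Context: Rings are associative with identity. $\beta(R)$ is the prime radical (intersection of all prime ideals), $\beta_{co}(R)$ the intersection of all completely prime ideals (an ideal $P$ is completely prime if $ab\in P$ implies $a\in P$ or $b\in P$), $\mathcal N(R)$ the set of nilpotent elements. $R$ is 2-primal if $\mathcal N(R)=\beta(R)$. $E_R(0)=\{ab: a,b\in R, a^kb=0\text{ for some }k\in\mathbb N\}$. *)

From mathcomp Require Import all_boot all_algebra.
Set Implicit Arguments. Unset Strict Implicit. Unset Printing Implicit Defensive.
Import GRing.Theory.
Local Open Scope ring_scope.

(* Subsets of a ring are predicates R -> Prop. Rings: associative with 1,
   not necessarily commutative (pzRingType also allows the zero ring). *)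

Definition is_ideal (R : pzRingType) (I : R -> Prop) : Prop :=
  I 0 /\
  (forall x y, I x -> I y -> I (x - y)) /\
  (forall r x, I x -> I (r * x)) /\
  (forall r x, I x -> I (x * r)).

(* Prime ideal: proper ideal P such that for all ideals A, B,
   AB ⊆ P implies A ⊆ P or B ⊆ P. (AB ⊆ P iff all products ab lie in P,
   since P is closed under finite sums.) *)
Definition is_prime_ideal (R : pzRingType) (P : R -> Prop) : Prop :=
  is_ideal P /\ (exists x, ~ P x) /\
  (forall A B : R -> Prop, is_ideal A -> is_ideal B ->
     (forall a b, A a -> B b -> P (a * b)) ->
     (forall a, A a -> P a) \/ (forall b, B b -> P b)).

Definition is_completely_prime_ideal (R : pzRingType) (P : R -> Prop) : Prop :=
  is_ideal P /\ (exists x, ~ P x) /\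
  (forall a b, P (a * b) -> P a \/ P b).

Definition prime_radical (R : pzRingType) (x : R) : Prop :=
  forall P : R -> Prop, is_prime_ideal P -> P x.

Definition beta_co (R : pzRingType) (x : R) : Prop :=
  forall P : R -> Prop, is_completely_prime_ideal P -> P x.

Definition nilpotents (R : pzRingType) (x : R) : Prop :=
  exists n : nat, x ^+ n = 0.

Definition E_R0 (R : pzRingType) (x : R) : Prop :=
  exists a b : R, x = a * b /\ exists k : nat, a ^+ k * b = 0.

Definition set_eq (R : Type) (A B : R -> Prop) : Prop := forall x, A x <-> B x.

Definition two_primal (R : pzRingType) : Prop :=
  set_eq (@nilpotents R) (@prime_radical R).

(** Since [N(R) = β(R)] is an ideal, 2-primality makes [N(R)] a completely
    semiprime ideal ([r^2 ∈ N] implies [r ∈ N]).  In a completely semiprime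
    ideal [I], [xy ∈ I] forces [yx ∈ I] and [xty ∈ I], so [a^k b ∈ I] already
    gives [ab ∈ I]; this puts [E_R(0)] inside [N(R)].  Conversely, if [x] has no
    power in [I], a Zorn argument yields a completely semiprime ideal [A]
    maximal with respect to avoiding the powers of [x]; for [u, v ∈ R] the set
    [{r | urv ∈ A}] is again completely semiprime and contains [A], and
    comparing it with [A] shows that [A] is completely prime.  Hence [β_co(R)]
    lies in every completely semiprime ideal, in particular in [N(R)]. *)

From mathcomp Require Import all_boot all_algebra.
From mathcomp Require Import boolp classical_sets.
Set Implicit Arguments. Unset Strict Implicit. Unset Printing Implicit Defensive.
Import GRing.Theory.
Local Open Scope classical_set_scope.
Local Open Scope ring_scope.

Lemma Zorn_subset_nonempty_chain (T : Type) (P : set (set T)) :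
  P !=set0 ->
  (forall F, F `<=` P -> F !=set0 -> total_on F subset ->
     P (\bigcup_(X in F) X)) ->
  exists2 A, P A & forall B, P B -> A `<=` B -> B `<=` A.
Proof.
move=> [A0 PA0] P_chain.
pose le (s t : {A | P A}) := `[< sval s `<=` sval t >].
have [|s t u /asboolP st /asboolP tu|C Ctot|t t_max] :=
  ZL_preorder (exist _ A0 PA0) (R := le).
- by move=> s; apply/asboolP.
- by apply/asboolP/(subset_trans st).
- have [[s0 Cs0]|C0] := pselect (C !=set0); last first.
    by exists (exist _ A0 PA0) => s Cs; exfalso; apply: C0; exists s.
  have PU : P (\bigcup_(X in sval @` C) X).
    apply: P_chain; first by move=> _ [s _ <-]; apply: svalP.
      by exists (sval s0), s0.
    move=> _ _ [s Cs <-] [t Ct <-].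
    by case: (Ctot s t Cs Ct) => /asboolP; [left | right].
  exists (exist _ _ PU) => s Cs; apply/asboolP => y sy.
  by exists (sval s) => //; exists s.
- exists (sval t); first exact: svalP.
  by move=> B PB tB; apply/asboolP/(t_max (exist _ B PB)); apply/asboolP.
Qed.

Section Ideals.
Variable R : pzRingType.
Implicit Types (I : R -> Prop) (r x y : R).

Lemma ideal0 I : is_ideal I -> I 0.
Proof. by case. Qed.

Lemma idealB I x y : is_ideal I -> I x -> I y -> I (x - y).
Proof. by case=> _ [IB _]; apply: IB. Qed.

Lemma idealMl I r x : is_ideal I -> I x -> I (r * x).
Proof. by case=> _ [_ [IL _]]; apply: IL. Qed.

Lemma idealMr I x r : is_ideal I -> I x -> I (x * r).
Proof. by case=> _ [_ [_ IR]]; apply: IR. Qed.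

Lemma prime_radical_ideal : is_ideal (@prime_radical R).
Proof.
split; first by move=> P [/ideal0].
split; first by move=> x y Hx Hy P HP; apply: idealB (Hx P HP) (Hy P HP); case: HP.
split; first by move=> r x Hx P HP; apply: idealMl (Hx P HP); case: HP.
by move=> r x Hx P HP; apply: idealMr (Hx P HP); case: HP.
Qed.

Lemma is_ideal_bigcup_chain (F : set (R -> Prop)) :
  F !=set0 -> total_on F subset -> (forall X, F X -> is_ideal X) ->
  is_ideal (\bigcup_(X in F) X).
Proof.
move=> [X0 FX0] Ftot Fid.
split; first by exists X0; last by apply: ideal0; apply: Fid.
split.
  move=> x y [X FX Xx] [Y FY Yy].
  have [XY|YX] := Ftot X Y FX FY.
    by exists Y => //; apply: idealB (XY _ Xx) Yy; apply: Fid.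
  by exists X => //; apply: idealB Xx (YX _ Yy); apply: Fid.
split=> r x [X FX Xx]; exists X => //.
  by apply: idealMl Xx; apply: Fid.
by apply: idealMr Xx; apply: Fid.
Qed.

Definition completely_semiprime I := is_ideal I /\ forall r, I (r * r) -> I r.

Lemma completely_prime_semiprime I :
  is_completely_prime_ideal I -> completely_semiprime I.
Proof. by move=> [idI [_ cpI]]; split=> // r /cpI []. Qed.

Section CompletelySemiprime.
Variable I : R -> Prop.
Hypothesis csI : completely_semiprime I.

Let idI : is_ideal I := csI.1.
Let csp_sqr r : I (r * r) -> I r := csI.2 r.

Lemma csp_mulC x y : I (x * y) -> I (y * x).
Proof.
move=> Ixy; apply: csp_sqr.
by rewrite mulrA -[y * x * y]mulrA; apply: idealMr idI _; apply: idealMl idI Ixy.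
Qed.

Lemma csp_mul_mid x y t : I (x * y) -> I (x * t * y).
Proof.
move=> /csp_mulC Iyx; apply: csp_sqr.
have : I (x * t * (y * x) * (t * y)).
  by apply: idealMr idI _; apply: idealMl idI Iyx.
by rewrite !mulrA.
Qed.

Lemma csp_exprM a b k : I (a ^+ k.+1 * b) -> I (a * b).
Proof.
elim: k => [|k IHk]; first by rewrite expr1.
set y := a ^+ k.+1 * b => Iay; apply: IHk; apply: csp_sqr.
(* [y a ∈ I] because [a y ∈ I], and [y a (a^k b) = y y]. *)
have Iya : I (y * a) by apply: csp_mulC; rewrite /y mulrA -exprS.
by move: (@idealMr I _ (a ^+ k * b) idI Iya); rewrite -mulrA [a * _]mulrA -exprS.
Qed.

Lemma csp_root x n : I (x ^+ n) -> I x.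
Proof.
case: n => [|n]; first by rewrite expr0 -[x]mul1r; apply: idealMr.
by move=> Ixn; rewrite -[x]mulr1; apply: (@csp_exprM x 1 n); rewrite mulr1.
Qed.

Lemma nilpotents_sub_csp x : nilpotents x -> I x.
Proof. by move=> [n xn0]; apply: (@csp_root x n); rewrite xn0; apply: ideal0. Qed.

Lemma E_R0_sub_csp x : E_R0 x -> I x.
Proof.
move=> [a [b [-> [[|k] akb0]]]].
  by rewrite expr0 mul1r in akb0; rewrite akb0 mulr0; apply: ideal0.
by apply: (@csp_exprM a b k); rewrite akb0; apply: ideal0.
Qed.

Lemma csp_sandwich u v : completely_semiprime (fun r => I (u * r * v)).
Proof.
split; last first.
  move=> r /= Iurrv; apply: csp_sqr.
  have : I ((u * r) * (v * u) * (r * v)).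
    by apply: csp_mul_mid; rewrite !mulrA in Iurrv *.
  by rewrite !mulrA.
split; first by rewrite /= mulr0 mul0r; apply: ideal0.
split; first by move=> x y Ix Iy /=; rewrite mulrBr mulrBl; apply: idealB.
split=> r x /= Ix.
  by have := @csp_mul_mid u (x * v) r; rewrite !mulrA; apply.
by have := @csp_mul_mid (u * x) v r; rewrite !mulrA; apply.
Qed.

End CompletelySemiprime.

Lemma two_primal_nilpotents_csp :
  two_primal R -> completely_semiprime (@nilpotents R).
Proof.
move=> NB; split; last by move=> r [n rrn0]; exists (2 * n)%N; rewrite exprM.
have [I0 [IB [IL IR]]] := prime_radical_ideal.
split; first by apply/NB.
split; first by move=> x y /NB Ix /NB Iy; apply/NB; apply: IB.
by split=> r x /NB Ix; apply/NB; [apply: IL | apply: IR].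
Qed.

Section MaximalAvoidingPowers.
Variables (A : R -> Prop) (x : R).
Hypotheses (csA : completely_semiprime A) (A_avoid : forall n, ~ A (x ^+ n)).
Hypothesis A_max : forall J, completely_semiprime J ->
  (forall n, ~ J (x ^+ n)) -> A `<=` J -> J `<=` A.

Let sandwich_meets_powers u v r :
  ~ A r -> A (u * r * v) -> exists n, A (u * x ^+ n * v).
Proof.
move=> Ar Aurv; apply: contrapT => no_power.
apply: Ar; apply: (A_max (csp_sandwich csA u v) _ _ Aurv) => [n Auxv|s As].
  by apply: no_power; exists n.
by apply: idealMr csA.1 _; apply: idealMl csA.1 As.
Qed.

Lemma maximal_avoiding_powers_completely_prime : is_completely_prime_ideal A.
Proof.
split; first by case: csA.
split; first by exists x; rewrite -[x]expr1; apply: A_avoid.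
move=> a b Aab; apply: contrapT => /not_orP [Aa Ab].
have [m Aaxm] : exists m, A (a * x ^+ m * 1).
  by apply: (sandwich_meets_powers Ab); rewrite mulr1.
have [k Axkm] : exists k, A (1 * x ^+ k * x ^+ m).
  by apply: (sandwich_meets_powers Aa); rewrite mul1r; rewrite mulr1 in Aaxm.
by apply: (@A_avoid (k + m)%N); rewrite exprD -[x ^+ k]mul1r.
Qed.

End MaximalAvoidingPowers.

End Ideals.

Lemma beta_co_sub_csp (R : pzRingType) (I : R -> Prop) (x : R) :
  completely_semiprime I -> beta_co x -> I x.
Proof.
move=> csI bx; apply: contrapT => Ix.
pose avoids (J : R -> Prop) := completely_semiprime J /\ forall n, ~ J (x ^+ n).
have [A [csA A_avoid] A_max] :
    exists2 A, avoids A & forall B, avoids B -> A `<=` B -> B `<=` A.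
  apply: Zorn_subset_nonempty_chain; first by exists I; split=> // n /(csp_root csI).
  move=> F Favoid F0 Ftot; split; last by move=> n [X /Favoid [_]]; apply.
  split; first by apply: is_ideal_bigcup_chain => // X /Favoid [[]].
  move=> r [X FX Xrr]; exists X => //.
  by case: (Favoid X FX) => [[_ Xsq] _]; apply: Xsq.
apply: (A_avoid 1%N); rewrite expr1; apply: bx.
apply: (maximal_avoiding_powers_completely_prime csA) => // J csJ J_avoid.
exact: A_max.
Qed.

Theorem corollary4p5 (R : pzRingType) :
  two_primal R ->
  set_eq (@prime_radical R) (@nilpotents R) /\
  set_eq (@nilpotents R) (@E_R0 R) /\
  set_eq (@E_R0 R) (@beta_co R).
Proof.
move=> NB; have csN := two_primal_nilpotents_csp NB.
have NE (x : R) : nilpotents x -> E_R0 x.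
  by move=> [n xn0]; exists x, 1; split; [rewrite mulr1 | exists n; rewrite mulr1].
have EN (x : R) : E_R0 x -> nilpotents x := E_R0_sub_csp csN (x:=x).
have N_beta_co (x : R) : nilpotents x -> beta_co x.
  by move=> Nx P /completely_prime_semiprime csP; apply: nilpotents_sub_csp.
split; first by move=> x; split=> /NB.
split; first by move=> x; split; [apply: NE | apply: EN].
by move=> x; split=> [/EN /N_beta_co | /(beta_co_sub_csp csN) /NE].
Qed.
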